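(* There exist almost discrete Fréchet–Urysohn (Tychonoff) spaces $X$ and $Y$ such that $X\times Y$ is not a weakly Grothendieck space. (For instance, $X$ the countable sequential fan $S_\omega$ and $Y$ the sequential fan $S_{\mathfrak{c}}$ with $2^\omega$ many spines.)
   Context: A space is almost discrete if it has exactly one non-isolated point. $S_\kappa$ denotes the quotient of the disjoint sum of $\kappa$ convergent sequences (with their limits) obtained by identifying all the limit points to one point. $C_p(X)$ is the space of continuous real-valued functions on $X$ with the pointwise convergence topology. A space $Z$ is a $g$-space if every subset $A\subseteq Z$ such that every infinite subset of $A$ has an accumulation point in $Z$ has compact closure in $Z$; $X$ is weakly Grothendieck if $C_p(X)$ is a $g$-space. *)

From HB Require Import structures.
From mathcomp Require Import all_boot all_order all_algebra.
From mathcomp Require Import all_classical all_reals all_analysis.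
Set Implicit Arguments. Unset Strict Implicit. Unset Printing Implicit Defensive.
Import Order.TTheory GRing.Theory Num.Theory numFieldTopology.Exports numFieldNormedType.Exports.
Local Open Scope classical_set_scope.
Local Open Scope ring_scope.

Definition isolated_point {X : topologicalType} (x : X) : Prop := nbhs x [set x].

Definition almost_discrete (X : topologicalType) : Prop :=
  exists x : X, ~ isolated_point x /\ forall y : X, y <> x -> isolated_point y.

Definition frechet_urysohn (X : topologicalType) : Prop :=
  forall (A : set X) (x : X), closure A x ->
    exists u : nat -> X, (forall n, A (u n)) /\ (u @ \oo --> x).

Definition tychonoff_space (R : realType) (X : topologicalType) : Prop :=
  accessible_space X /\
  forall (B : set X) (x : X), closed B -> ~ B x ->
    exists f : X -> R, continuous f /\ f x = 0 /\ (forall b, B b -> f b = 1).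

Definition Cp (R : realType) (X : topologicalType) : set {ptws X -> R} :=
  [set f | continuous (f : X -> R)].

(* The closure of A in S is closure A ∩ S, and compactness of a subset of the
   ambient space coincides with compactness in the subspace topology. *)
Definition g_subspace {Z : topologicalType} (S : set Z) : Prop :=
  forall A : set Z, A `<=` S ->
    (forall B : set Z, B `<=` A -> infinite_set B ->
       exists z, S z /\ limit_point B z) ->
    compact (closure A `&` S).

Arguments Cp : clear implicits.

Definition weakly_grothendieck (R : realType) (X : topologicalType) : Prop :=
  g_subspace (Cp R X).

From HB Require Import structures.
From mathcomp Require Import all_boot all_order all_algebra.
From mathcomp Require Import all_classical all_reals all_analysis.
Import Order.TTheory GRing.Theory Num.Theory numFieldTopology.Exports numFieldNormedType.Exports.
Local Open Scope classical_set_scope.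
Local Open Scope ring_scope.
Set Implicit Arguments. Unset Strict Implicit. Unset Printing Implicit Defensive.

(* Take X = S_omega and Y = S_c, the fans with spines indexed by nat and by
   nat -> nat; both are almost discrete, Frechet-Urysohn and zero-dimensional.
   In X * Y let D be the "diagonal" of the points ((n, phi n), (phi, n)).
   A neighbourhood of the pair of apices is given by heights psi on the spines
   of X and theta on those of Y, and it contains the diagonal point with
   phi := psi and n := theta psi; so the indicator of D is not continuous.
   On the other hand a countable family of phi's is dominated by a single psi
   beyond an index theta phi, so a countable part of D stays away from every
   non-isolated point, and every real function supported by it is continuous.
   Let A be the set of indicators of finite subsets of D.  A sequence in A lies
   in the compact set of {0,1}-valued functions supported by the countable
   union of the supports, which is contained in C_p(X * Y); hence every
   infinite subset of A accumulates in C_p(X * Y).  If C_p(X * Y) were a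
   g-space, the closure of A would then be contained in C_p(X * Y), but it
   contains the indicator of D. *)

(* [None] is the apex of the fan and [Some (i, k)] the [k]-th point of the [i]-th spine. *)
Definition fan (I : Type) := option (I * nat).

Definition fan_tail {I : Type} (psi : I -> nat) : set (fan I) :=
  [set z | if z is Some (i, k) then (psi i <= k)%N else True].

Definition fan_open {I : Type} (U : set (fan I)) : Prop :=
  U None -> exists psi : I -> nat, fan_tail psi `<=` U.

HB.instance Definition _ (I : Type) := gen_eqMixin (fan I).
HB.instance Definition _ (I : Type) := gen_choiceMixin (fan I).

Section FanTopology.
Variable I : Type.

Lemma fan_openT : fan_open [set: fan I].
Proof. by move=> _; exists (fun=> 0%N). Qed.

Lemma fan_openI : setI_closed (@fan_open I).
Proof.
move=> A B oA oB [AN BN]; have [p pA] := oA AN; have [q qB] := oB BN.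
exists (fun i => maxn (p i) (q i)) => -[[i k]|] //=.
by rewrite geq_max => /andP[pk qk]; split; [apply: pA|apply: qB].
Qed.

Lemma fan_open_bigU (J : Type) (F : J -> set (fan I)) :
  (forall j, fan_open (F j)) -> fan_open (\bigcup_j F j).
Proof.
by move=> oF [j _ /oF [p pF]]; exists p => z /pF Fz; exists j.
Qed.

HB.instance Definition _ := isOpenTopological.Build (fan I) fan_openT fan_openI fan_open_bigU.

Lemma fan_openE (U : set (fan I)) : open U <-> fan_open U.
Proof.
rewrite openE; split=> [oU /oU [B [oB BN BU]]|oU z Uz].
  by have [psi tB] := oB BN; exists psi => z /tB /BU.
by exists U; split.
Qed.

Lemma open_fan_tail (psi : I -> nat) : open (fan_tail psi).
Proof. by apply/fan_openE => _; exists psi. Qed.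

Lemma nbhs_fan_tail (psi : I -> nat) : nbhs (None : fan I) (fan_tail psi).
Proof. by apply: open_nbhs_nbhs; split; [exact: open_fan_tail|]. Qed.

Lemma nbhs_fan_apexP (U : set (fan I)) :
  nbhs (None : fan I) U <-> exists psi : I -> nat, fan_tail psi `<=` U.
Proof.
split=> [[B [oB BN BU]]|[psi tU]]; last exact: filterS tU (nbhs_fan_tail psi).
by have [psi tB] := oB BN; exists psi => z /tB /BU.
Qed.

Lemma open_fan_apexN (U : set (fan I)) : ~ U None -> open U.
Proof. by move=> UN; apply/fan_openE. Qed.

Lemma isolated_fan_point (a : I * nat) : isolated_point (Some a : fan I).
Proof. by apply: open_nbhs_nbhs; split; [exact: open_fan_apexN|]. Qed.

Lemma open_fan_pointC (a : I * nat) : open (~` [set (Some a : fan I)]).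
Proof.
apply/fan_openE => _; exists (fun=> a.2.+1); case: a => j l [[i k]|] //= lk [_ kl].
by rewrite kl ltnn in lk.
Qed.

Lemma fan_apex_not_isolated (i0 : I) : ~ isolated_point (None : fan I).
Proof. by move=> /nbhs_fan_apexP [psi /(_ (Some (i0, psi i0)) (leqnn _))]. Qed.

Lemma fan_almost_discrete (i0 : I) : almost_discrete (fan I).
Proof.
exists None; split; first exact: fan_apex_not_isolated.
by case=> // a _; exact: isolated_fan_point.
Qed.

Lemma cvg_fan_spine (i : I) (g : nat -> nat) :
  (forall n, (n <= g n)%N) -> (fun n => Some (i, g n) : fan I) @ \oo --> (None : fan I).
Proof.
move=> ng U /nbhs_fan_apexP [psi tU]; exists (psi i) => // n /= ?.
by apply: tU; apply: leq_trans (ng n).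
Qed.

(* A set with the apex in its closure either meets some spine infinitely often,
   or misses a whole tail of every spine. *)
Lemma fan_frechet_urysohn : frechet_urysohn (fan I).
Proof.
move=> A [a|] clA.
  have [y [Ay ya]] := clA _ (isolated_fan_point a); rewrite ya in Ay.
  by exists (fun=> Some a); split=> //; exact: cvg_cst.
have [AN|AN] := pselect (A None).
  by exists (fun=> None); split=> //; exact: cvg_cst.
have [i spineA] : exists i, forall n, exists k, (n <= k)%N /\ A (Some (i, k)).
  apply: contrapT => /forallNP noSpine.
  have /choice [psi psiA] : forall i, exists n, forall k, (n <= k)%N -> ~ A (Some (i, k)).
    move=> i; have /existsNP [n nA] := noSpine i; exists n => k nk Ak.
    by apply: nA; exists k.
  have [[[j k]|] [Az tz]] := clA _ (nbhs_fan_tail psi); [exact: psiA tz Az|exact: AN].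
have /choice [g gA] := spineA.
exists (fun n => Some (i, g n)); split; first by move=> n; case: (gA n).
by apply: cvg_fan_spine => n; case: (gA n).
Qed.

End FanTopology.

Lemma continuous_indic_clopen (R : realType) (T : topologicalType) (U : set T) :
  clopen U -> continuous (\1_U : T -> R).
Proof.
move=> [oU cU] x; apply: cvg_near_cst.
have [Ux|nUx] := pselect (U x).
  by apply: filterS (open_nbhs_nbhs (conj oU Ux)) => z Uz; rewrite !indicE !mem_set.
have oCU : open (~` U) by exact: closed_openC.
by apply: filterS (open_nbhs_nbhs (conj oCU nUx)) => z /= nUz;
  rewrite !indicE !memNset.
Qed.

Lemma fan_tychonoff (R : realType) (I : Type) : tychonoff_space R (fan I).
Proof.
split.
  move=> [a|] [b|] ab; last by rewrite eqxx in ab.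
  - exists [set Some a]; split; first exact: open_fan_apexN.
      by rewrite inE.
    by rewrite inE => /= ba; move: ab; rewrite ba eqxx.
  - by exists [set Some a]; split; [exact: open_fan_apexN|rewrite inE|rewrite inE].
  - exists (~` [set Some b]); split; first exact: open_fan_pointC.
      by rewrite inE.
    by rewrite inE /= => /(_ erefl).
move=> B [a|] cB Bx.
  exists (\1_(~` [set Some a])); split.
    apply: continuous_indic_clopen; split; first exact: open_fan_pointC.
    by rewrite closedC; exact: open_fan_apexN.
  split; first by rewrite indicE memNset //= => /(_ erefl).
  by move=> b Bb; rewrite indicE mem_set // => ba; apply: Bx; rewrite -ba.
exists (\1_B); split.
  by apply: continuous_indic_clopen; split=> //; exact: open_fan_apexN Bx.
by split=> [|b Bb]; rewrite indicE; [rewrite memNset|rewrite mem_set].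
Qed.

Lemma nbhs_setX (X Y : topologicalType) (x : X) (y : Y) (P : set X) (Q : set Y) :
  nbhs x P -> nbhs y Q -> nbhs (x, y) (P `*` Q).
Proof. by move=> xP yQ; exists (P, Q). Qed.

Lemma isolated_pair (X Y : topologicalType) (x : X) (y : Y) :
  isolated_point x -> isolated_point y -> isolated_point (x, y).
Proof.
by move=> xx yy; have := nbhs_setX xx yy; apply: filterS => -[a b] [/= -> ->].
Qed.

Lemma countable_fun_dominated (Phi : set (nat -> nat)) : countable Phi ->
  exists (psi : nat -> nat) (theta : (nat -> nat) -> nat),
    forall phi n, Phi phi -> (theta phi <= n)%N -> (phi n < psi n)%N.
Proof.
move=> /pcard_surjP [g Phig].
(* [theta phi] is an index of [phi] in the enumeration [g] of [Phi], and [psi n]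
   exceeds the values at [n] of the first [n + 1] enumerated functions. *)
pose theta phi := xget 0%N [set i | g i = phi].
exists (fun n => (\max_(i < n.+1) g i n).+1), theta => phi n /Phig [i _ gi] thn.
have <- : g (theta phi) = phi by apply: (@xgetPex _ 0%N [set j | g j = phi]); exists i.
rewrite ltnS -ltnS in thn *.
exact: (@leq_bigmax _ (fun j : 'I_n.+1 => g j n) (Ordinal thn)).
Qed.

Local Notation fan_pair := (fan nat * fan (nat -> nat))%type.

Definition diag_pt (phi : nat -> nat) (n : nat) : fan_pair :=
  (Some (n, phi n), Some (phi, n)).

Definition fan_diag (Phi : set (nat -> nat)) : set fan_pair :=
  [set diag_pt phi n | phi in Phi & n in [set: nat]].

Lemma nbhs_avoid_fan_diag (Phi : set (nat -> nat)) (q : fan_pair) :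
  countable Phi -> ~ isolated_point q ->
  exists2 W, nbhs q W & forall z, W z -> ~ fan_diag Phi z.
Proof.
move=> cPhi; case: q => [[[n0 m0]|] [[phi0 k0]|]] q_nonisolated.
- by exfalso; apply/q_nonisolated/isolated_pair; exact: isolated_fan_point.
- exists ([set Some (n0, m0)] `*` fan_tail (fun=> n0.+1)).
    by apply: nbhs_setX; [exact: isolated_fan_point|exact: nbhs_fan_tail].
  by move=> z + [phi _ [n _ zE]]; rewrite -zE => -[[->]]; rewrite /fan_tail /= ltnn.
- exists (fan_tail (fun n => (phi0 n).+1) `*` [set Some (phi0, k0)]).
    by apply: nbhs_setX; [exact: nbhs_fan_tail|exact: isolated_fan_point].
  move=> z + [phi _ [n _ zE]]; rewrite -zE => -[+ /= [phi0E _]].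
  by rewrite phi0E /fan_tail /= ltnn.
- have [psi [theta dom]] := countable_fun_dominated cPhi.
  exists (fan_tail psi `*` fan_tail theta).
    by apply: nbhs_setX; exact: nbhs_fan_tail.
  move=> z + [phi Phiphi [n _ zE]]; rewrite -zE => -[/= psin thetan].
  by have := dom _ _ Phiphi thetan; rewrite ltnNge psin.
Qed.

Lemma countable_fan_diag_sub (F : set fan_pair) : countable F ->
  F `<=` fan_diag setT -> exists2 Phi, countable Phi & F `<=` fan_diag Phi.
Proof.
move=> cF Fdiag; pose spine (z : fan_pair) := if z.2 is Some (phi, _) then phi else point.
exists (spine @` F); first exact: sub_countable (card_image_le _ _) cF.
move=> z Fz; have [phi _ [n _ zE]] := Fdiag z Fz.
by exists phi; [exists z => //; rewrite -zE|exists n].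
Qed.

Lemma continuous_fan_diag_supported (R : realType) (F : set fan_pair) (h : fan_pair -> R) :
  countable F -> F `<=` fan_diag setT -> (forall z, h z != 0 -> F z) -> continuous h.
Proof.
move=> cF /(countable_fan_diag_sub cF) [Phi cPhi FPhi] hF q; apply: cvg_near_cst.
have [q_isolated|q_nonisolated] := pselect (isolated_point q).
  by apply: filterS q_isolated => z ->.
have [W qW Wdiag] := nbhs_avoid_fan_diag cPhi q_nonisolated.
have hW z : W z -> h z = 0.
  by move=> Wz; apply: contra_notP (Wdiag _ Wz) => /eqP /hF /FPhi.
rewrite (hW q (nbhs_singleton qW)); exact: filterS hW qW.
Qed.

Lemma indic_fan_diag_discontinuous (R : realType) :
  ~ continuous (\1_(fan_diag setT) : fan_pair -> R).
Proof.
move=> /(_ (None, None) _ (nbhsx_ballx _ _ ltr01)) [[P Q] /= [/nbhs_fan_apexP [psi tP]]].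
move=> /nbhs_fan_apexP [theta tQ] PQ.
have /PQ : (P `*` Q) (diag_pt psi (theta psi)) by split; [apply: tP|apply: tQ]; exact: leqnn.
rewrite /ball /= !indicE memNset; last by move=> [? _ [? _ []]].
rewrite mem_set; last by exists psi => //; exists (theta psi).
by rewrite sub0r normrN normr1 ltxx.
Qed.

Lemma infinite_set_inj_seq (T : Type) (B : set T) : infinite_set B ->
  exists2 u : nat -> T, injective u & range u `<=` B.
Proof.
move=> /infiniteP /card_leP [f].
exists (fun n => val (f (SigSub (mem_set (I : [set: nat] n))))).
  move=> m n /val_inj /(@inj _ _ _ f) mn.
  by have := congr1 val (mn (mem_set I) (mem_set I)).
by move=> _ [n _ <-]; exact: set_valP.
Qed.

Lemma compact_limit_point_seq (T : topologicalType) (K : set T) (u : nat -> T) :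
  compact K -> injective u -> range u `<=` K ->
  exists2 z, K z & limit_point (range u) z.
Proof.
move=> cK u_inj uK.
have [z [Kz uz]] : K `&` cluster (u @ \oo) !=set0.
  by apply: cK; exists 0%N => // n _; apply: uK; exists n.
exists z => // U zU.
have [N uNz] : exists N, forall n, (N <= n)%N -> u n != z.
  have [[n0 un0]|/forallNP unz] := pselect (exists n, u n = z); last first.
    by exists 0%N => n _; apply/eqP.
  exists n0.+1 => n n0n; apply/eqP => unz.
  by move: n0n; rewrite (u_inj _ _ (etrans unz (esym un0))) ltnn.
have [_ [[n Nn <-] Uun]] : [set u n | n in [set n | (N <= n)%N]] `&` U !=set0.
  by apply: uz zU; exists N => // n Nn; exists n.
by exists (u n); split; [exact: uNz|exists n|].
Qed.

Lemma g_subspace_closure_sub (Z : topologicalType) (S A : set Z) :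
  hausdorff_space Z -> g_subspace S -> A `<=` S ->
  (forall B, B `<=` A -> infinite_set B -> exists z, S z /\ limit_point B z) ->
  closure A `<=` S.
Proof.
move=> hZ gS AS Aacc z Az.
have cK := compact_closed hZ (gS A AS Aacc).
suff : (closure A `&` S) z by case.
rewrite ((closure_id (closure A `&` S)).1 cK); apply: closureS Az => a Aa.
by split; [exact: subset_closure|exact: AS].
Qed.

Lemma compact_zero_one_on (R : realType) (T : eqType) (G : set T) :
  compact [set f : {ptws T -> R} | forall t, f t = 0 \/ G t /\ f t = 1].
Proof.
apply: (@tychonoff T (fun=> R) (fun t r => r = 0 \/ G t /\ r = 1)) => t.
apply: finite_compact.
apply: (@sub_finite_set _ _ [set 0; 1]); last exact: finite_set2.
by move=> r [->|[_ ->]]; [left|right].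
Qed.

Lemma indic_in_closure_finite (R : realType) (T : topologicalType) (D : set T) :
  closure [set (\1_F : {ptws T -> R}) | F in [set F | finite_set F /\ F `<=` D]]
    (\1_D : {ptws T -> R}).
Proof.
pose admissible := [set F : set T | finite_set F /\ F `<=` D].
pose above F0 := [set F | admissible F /\ F0 `<=` F].
have admissible0 : admissible set0 by split; [exact: finite_set0|exact: sub0set].
have above_filter : ProperFilter (filter_from admissible above).
  apply: filter_from_proper; last by move=> F0 AF0; exists F0; split.
  apply: filter_from_filter; first by exists set0.
  move=> F0 F1 [fF0 F0D] [fF1 F1D]; exists (F0 `|` F1).
    by split; [rewrite finite_setU|rewrite subUset].
  by move=> F [AF F01]; split; split=> // t ?; apply: F01; [left|right].
rewrite closureEcvg; exists ((fun F => \1_F : {ptws T -> R}) @ filter_from admissible above).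
  exact: fmap_proper_filter.
split; last by move=> W AW; exists set0 => // F [AF _]; apply: AW; exists F.
apply/pointwise_cvgP => t; apply: cvg_near_cst.
have [Dt|nDt] := pselect (D t).
  exists [set t]; first by split; [exact: finite_set1|move=> _ ->].
  by move=> F [_ tF] /=; rewrite !indicE !mem_set //; apply: tF.
by exists set0 => // F [[_ FD] _] /=; rewrite !indicE !memNset // => /FD.
Qed.

Lemma fan_pair_not_weakly_grothendieck (R : realType) :
  ~ weakly_grothendieck R fan_pair.
Proof.
pose A := [set (\1_F : {ptws fan_pair -> R}) |
             F in [set F | finite_set F /\ F `<=` fan_diag setT]].
have indic_support (F : set fan_pair) z : \1_F z != 0 :> R -> F z.
  by rewrite indicE; case: (boolP (z \in F)) => [/set_mem|_]; rewrite ?eqxx.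
have ACp : A `<=` Cp R fan_pair.
  move=> _ [F [fF Fdiag] <-].
  exact: continuous_fan_diag_supported (finite_set_countable fF) Fdiag (indic_support F).
have Aacc B : B `<=` A -> infinite_set B ->
    exists f, Cp R fan_pair f /\ limit_point B f.
  move=> BA /infinite_set_inj_seq [u u_inj uB].
  have /choice [F uF] :
      forall n, exists F, [/\ finite_set F, F `<=` fan_diag setT & \1_F = u n].
    by move=> n; have [F [fF Fdiag] Fu] := BA _ (uB _ (imageT u n)); exists F.
  pose G := \bigcup_n F n.
  have cG : countable G.
    by apply: bigcup_countable => // n _; case: (uF n) => fF _ _; exact: finite_set_countable.
  have Gdiag : G `<=` fan_diag setT by move=> z [n _]; case: (uF n) => _ + _; apply.
  pose K := [set f : {ptws fan_pair -> R} | forall t, f t = 0 \/ G t /\ f t = 1].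
  have KCp : K `<=` Cp R fan_pair.
    move=> f Kf; apply: continuous_fan_diag_supported cG Gdiag _ => z.
    by case: (Kf z) => [->|[]//]; rewrite eqxx.
  have uK : range u `<=` K.
    move=> _ [n _ <-] z; case: (uF n) => _ _ <-; rewrite indicE.
    by case: (boolP (z \in F n)) => [/set_mem Fz|_]; [right; split=> //; exists n|left].
  have [f Kf uf] := compact_limit_point_seq (@compact_zero_one_on R _ G) u_inj uK.
  exists f; split; first exact: KCp.
  by move=> U fU; have [y [yf uy Uy]] := uf U fU; exists y; split=> //; exact: uB.
have ptws_hausdorff : hausdorff_space {ptws fan_pair -> R}.
  exact: hausdorff_product (fun=> @Rhausdorff R).
move=> gCp; apply: (@indic_fan_diag_discontinuous R).
apply: (g_subspace_closure_sub ptws_hausdorff gCp ACp Aacc).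
exact: indic_in_closure_finite.
Qed.

Theorem proposition11 (R : realType) :
  exists X Y : topologicalType,
    (almost_discrete X /\ frechet_urysohn X /\ tychonoff_space R X) /\
    (almost_discrete Y /\ frechet_urysohn Y /\ tychonoff_space R Y) /\
    ~ weakly_grothendieck R (X * Y)%type.
Proof.
exists (fan nat), (fan (nat -> nat)); split; [|split].
- split; first exact: (fan_almost_discrete 0%N).
  by split; [exact: fan_frechet_urysohn|exact: fan_tychonoff].
- split; first exact: (fan_almost_discrete point).
  by split; [exact: fan_frechet_urysohn|exact: fan_tychonoff].
- exact: fan_pair_not_weakly_grothendieck.
Qed.
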